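(* Let $k>1$ and $1\le\gamma<k$. Consider instances $\mathcal{I}_{m,\mathcal{A}_n,k}$ whose users are partitioned into $\gamma$ groups $G_1,\dots,G_\gamma$ each of which is cohesive. For any scoring rule $f$, the price of justified representation over such instances satisfies $P(k,f)\le\frac{k}{k-\gamma}$, and this holds with equality for certain scoring rules, such as maximin diverse approval $f_{DA}$.
   Context: An instance $\mathcal{I}_{m,\mathcal{A}_n,k}=\langle m,\mathcal{A}_n,k\rangle$ consists of items $[m]$, users $[n]$, an approval profile $\mathcal{A}_n=(A_1,\dots,A_n)$ with $A_u\subseteq[m]$, and a target size $k\le m$. A scoring rule assigns each item a score $f(i,\mathcal{A}_n)\ge0$, additive over sets: $f(S)=\sum_{i\in S}f(i,\mathcal{A}_n)$. A group $G\subseteq[n]$ is cohesive if $\bigcap_{u\in G}A_u\ne\emptyset$; $S$ represents $G$ if some $u\in G$ has $A_u\cap S\ne\emptyset$; $S$ satisfies justified representation (JR) if $|S|=k$ and $S$ represents every cohesive group of at least $n/k$ users. $S^*$ maximizes $f(S)$ over all $S\subseteq[m]$ with $|S|=k$; $S^*_{JR}$ maximizes $f(S)$ over sets satisfying JR. The price of JR on an instance is $P(\mathcal{I}_{m,\mathcal{A}_n,k},f)=f(S^* )/f(S^*_{JR})$, and $P(k,f)$ is its maximum over the instances considered. Maximin diverse approval with respect to groups $G_1,\dots,G_\gamma$ is $f_{DA}(i,\mathcal{A}_n)=\min_{g\in[\gamma]}\frac{1}{|G_g|}|\{u\in G_g:i\in A_u\}|$. *)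

From mathcomp Require Import all_boot all_order all_algebra.
Set Implicit Arguments. Unset Strict Implicit. Unset Printing Implicit Defensive.
Import Order.TTheory GRing.Theory Num.Theory.
Local Open Scope ring_scope.

(* Items are 'I_m, users are 'I_n; an approval profile assigns to each user
   the set A_u of approved items. *)
Definition profile (m n : nat) := 'I_n -> {set 'I_m}.

Definition cohesive m n (A : profile m n) (G : {set 'I_n}) : bool :=
  [exists i : 'I_m, [forall u in G, i \in A u]].

Definition represents m n (A : profile m n) (S : {set 'I_m}) (G : {set 'I_n}) : bool :=
  [exists u in G, A u :&: S != set0].

(* Justified representation: |S| = k and every cohesive group with
   |G| >= n/k (i.e. |G| * k >= n) is represented. *)
Definition JR m n (A : profile m n) (k : nat) (S : {set 'I_m}) : bool :=
  (#|S| == k) &&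
  [forall G : {set 'I_n}, (cohesive A G && (n <= #|G| * k)%N) ==> represents A S G].

Definition setscore (R : realFieldType) m (s : 'I_m -> R) (S : {set 'I_m}) : R :=
  \sum_(i in S) s i.

(* f(S^* ): maximum score over sets of size k (scores are >= 0, so 0 is a
   harmless initial value of the max). *)
Definition opt (R : realFieldType) m (s : 'I_m -> R) (k : nat) : R :=
  \big[Num.max/0]_(S : {set 'I_m} | #|S| == k) setscore s S.

Definition optJR (R : realFieldType) m n (A : profile m n) (s : 'I_m -> R) (k : nat) : R :=
  \big[Num.max/0]_(S : {set 'I_m} | JR A k S) setscore s S.

Definition price (R : realFieldType) m n (A : profile m n) (s : 'I_m -> R) (k : nat) : R :=
  opt s k / optJR A s k.

Definition group_of n gamma (g : 'I_n -> 'I_gamma) (j : 'I_gamma) : {set 'I_n} :=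
  [set u | g u == j].

Definition partitioned_cohesive m n gamma (A : profile m n) (g : 'I_n -> 'I_gamma) : bool :=
  [forall j : 'I_gamma, (group_of g j != set0) && cohesive A (group_of g j)].

(* Maximin diverse approval w.r.t. the groups G_1..G_gamma
   (all fractions are <= 1, so 1 is the neutral value of the min for gamma >= 1). *)
Definition fDA (R : realFieldType) m n gamma (g : 'I_n -> 'I_gamma) (A : profile m n)
  (i : 'I_m) : R :=
  \big[Num.min/1]_(j : 'I_gamma)
     (#|[set u in group_of g j | i \in A u]|%:R / #|group_of g j|%:R).

Definition scoring_rule (R : realFieldType) := forall m n : nat, 'I_m -> profile m n -> R.

Definition nonneg_rule (R : realFieldType) (f : scoring_rule R) : Prop :=
  forall m n (i : 'I_m) (A : profile m n), 0 <= f m n i A.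

From mathcomp Require Import all_boot all_order all_algebra.
From mathcomp Require Import zify lra.
Set Implicit Arguments. Unset Strict Implicit. Unset Printing Implicit Defensive.
Import Order.TTheory GRing.Theory Num.Theory.
Local Open Scope ring_scope.

(* Upper bound: from an optimal k-set keep its k - gamma best items, which carry
   at least a (k - gamma)/k fraction of its score, and add one common item of
   each cohesive group; after padding to size k every user approves an item of
   the set, so it satisfies JR.
   Tightness: gamma zero-score "group items" i < gamma and k positive-score
   "fillers"; each group item i is the only item approved by the gamma users
   u >= gamma with u = i mod gamma, a cohesive group large enough to force i
   into every JR set, so JR sets keep only k - gamma fillers. Maximin diverse
   approval has this shape when gamma >= 2: a filler is approved by exactly one
   member of every group, a group item by nobody outside its group. *)

Section Setscore.
Variables (R : realFieldType) (m : nat) (s : 'I_m -> R).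

Lemma exists_min_setscore (S : {set 'I_m}) :
  (0 < #|S|)%N -> exists2 x, x \in S & #|S|%:R * s x <= setscore s S.
Proof.
case/card_gt0P=> x0 x0S; have [x xS x_min] := arg_minP s x0S.
exists x => //; rewrite /setscore mulr_natl -sumr_const.
by apply: ler_sum => i; apply: x_min.
Qed.

Hypothesis s_ge0 : forall i, 0 <= s i.

Lemma setscore_ge0 S : 0 <= setscore s S.
Proof. exact: sumr_ge0. Qed.

Lemma setscore_subset (S T : {set 'I_m}) :
  S \subset T -> setscore s S <= setscore s T.
Proof.
move=> sST; rewrite /setscore [leRHS](big_setID S) /= (setIidPr sST) lerDl.
exact: sumr_ge0.
Qed.

Lemma exists_subset_setscore_avg (r t : nat) (S : {set 'I_m}) :
  #|S| = (r + t)%N -> exists S' : {set 'I_m},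
    [/\ S' \subset S, #|S'| = r & r%:R * setscore s S <= (r + t)%:R * setscore s S'].
Proof.
elim: t S => [|t IHt] S cardS; first by exists S; rewrite addn0 in cardS *.
have [x xS x_min] : exists2 x, x \in S & #|S|%:R * s x <= setscore s S.
  by apply: exists_min_setscore; rewrite cardS addnS.
have cardSx : #|S :\ x| = (r + t)%N.
  by move: cardS; rewrite (cardsD1 x) xS addnS add1n => -[].
have [S' [sS'Sx cardS' avgS']] := IHt _ cardSx.
exists S'; split=> //; first exact: subset_trans sS'Sx (subsetDl _ _).
have splitS : setscore s S = s x + setscore s (S :\ x) by rewrite /setscore (big_setD1 _ xS).
move: avgS' x_min; rewrite cardS splitS addnS -!natr1 !natrD.
have := setscore_ge0 S'; have := setscore_ge0 (S :\ x).
set a := setscore s _; set b := setscore s _; set rR := r%:R; set tR := t%:R.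
have [rR_ge0 tR_ge0] : 0 <= rR /\ 0 <= tR by [].
(* minimality of x gives (r + t) s x <= a; scale the goal by r + t *)
move=> a_ge0 b_ge0 avg_Sx min_x.
have [rt0 | rt_neq0] := eqVneq (rR + tR) 0.
  have -> : rR = 0 by lra.
  by rewrite mul0r; nra.
have rt_gt0 : 0 < rR + tR by rewrite lt0r rt_neq0 addr_ge0.
by rewrite -(ler_pM2l rt_gt0); nra.
Qed.

End Setscore.

Lemma exists_superset_card (T : finType) (X : {set T}) (k : nat) :
  (#|X| <= k <= #|T|)%N -> exists2 Y : {set T}, X \subset Y & #|Y| = k.
Proof.
elim: k => [|k IHk] /andP[cardX cardT].
  by exists X => //; apply/eqP; rewrite -leqn0.
have [cardXk | neXk] := eqVneq #|X| k.+1; first by exists X => //; apply/eqP.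
have [Y sXY cardY] : exists2 Y : {set T}, X \subset Y & #|Y| = k.
  by apply: IHk; lia.
have /subsetPn[z _ zNY] : ~~ ([set: T] \subset Y).
  by apply/negP=> /subset_leq_card; rewrite cardsT cardY; lia.
exists (z |: Y); first exact: subset_trans sXY (subsetUr _ _).
by rewrite cardsU1 zNY cardY.
Qed.

Lemma JR_of_approved_by_all (m n : nat) (A : profile m n) (k : nat) (S : {set 'I_m}) :
  (0 < n)%N -> #|S| = k -> (forall u, A u :&: S != set0) -> JR A k S.
Proof.
move=> n_gt0 cardS approved; rewrite /JR cardS eqxx /=.
apply/forallP=> G; apply/implyP=> /andP[_ bigG].
have [G0 | [u uG]] := set_0Vmem G; first by move: bigG; rewrite G0 cards0; lia.
by apply/existsP; exists u; rewrite uG approved.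
Qed.

Lemma optJR_ge0 (R : realFieldType) m n (A : profile m n) (s : 'I_m -> R) k :
  0 <= optJR A s k.
Proof. exact: bigmax_ge_id. Qed.

Lemma partitioned_cohesive_common_item m n gamma (A : profile m n) (g : 'I_n -> 'I_gamma) :
  partitioned_cohesive A g -> exists c : 'I_gamma -> 'I_m, forall u, c (g u) \in A u.
Proof.
move=> /forallP cohA.
have /fin_all_exists[c c_common] :
    forall j, exists i : 'I_m, [forall u in group_of g j, i \in A u].
  by move=> j; have /andP[_ /existsP] := cohA j.
by exists c => u; move/forallP/(_ u): (c_common (g u)); rewrite inE eqxx.
Qed.

Lemma partitioned_cohesive_users_gt0 m n gamma (A : profile m n) (g : 'I_n -> 'I_gamma) :
  (0 < gamma)%N -> partitioned_cohesive A g -> (0 < n)%N.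
Proof.
move=> gamma_gt0 /forallP/(_ (Ordinal gamma_gt0))/andP[/set0Pn[u _] _].
exact: leq_ltn_trans (ltn_ord u).
Qed.

Lemma opt_le_optJR_partitioned (R : realFieldType) (k gamma : nat) (m n : nat)
    (A : profile m n) (g : 'I_n -> 'I_gamma) (s : 'I_m -> R) :
  (gamma < k <= m)%N -> (0 < n)%N -> (forall i, 0 <= s i) ->
  partitioned_cohesive A g ->
  opt s k <= (k%:R / (k - gamma)%:R) * optJR A s k.
Proof.
move=> /andP[gamma_lt_k k_le_m] n_gt0 s_ge0 cohA.
have [c c_common] := partitioned_cohesive_common_item cohA.
have kg_gt0 : 0 < (k - gamma)%:R :> R by rewrite ltr0n subn_gt0.
apply: bigmax_le => [|S /eqP cardS].
  by rewrite mulr_ge0 ?divr_ge0 ?optJR_ge0.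
have gamma_le_k := ltnW gamma_lt_k.
have cardS_split : #|S| = (k - gamma + gamma)%N by rewrite subnK.
have [S' [_ cardS' avgS']] := exists_subset_setscore_avg s_ge0 cardS_split.
rewrite subnK // in avgS'.
have cardC : (#|[set c j | j : 'I_gamma]| <= gamma)%N.
  by rewrite -[leqRHS]card_ord leq_imset_card.
have card_S'C : (#|S' :|: [set c j | j : 'I_gamma]| <= k)%N.
  apply: leq_trans (leq_card_setU _ _) _.
  by rewrite cardS' -[leqRHS](subnK gamma_le_k) leq_add2l.
have [Y sS'CY cardY] :
    exists2 Y : {set 'I_m}, S' :|: [set c j | j : 'I_gamma] \subset Y & #|Y| = k.
  by apply: exists_superset_card; rewrite card_S'C card_ord.
have JRY : JR A k Y.
  apply: JR_of_approved_by_all cardY _ => //= u; apply/set0Pn; exists (c (g u)).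
  by rewrite inE c_common (subsetP sS'CY) // inE imset_f ?orbT.
have S'_le : setscore s S' <= optJR A s k.
  apply: le_trans _ (le_bigmax_cond _ _ JRY).
  exact: setscore_subset (subset_trans (subsetUl _ _) sS'CY).
rewrite mulrAC ler_pdivlMr // mulrC.
by apply: le_trans avgS' _; rewrite ler_wpM2l.
Qed.

Lemma setscore_const_off (R : realFieldType) m (s : 'I_m -> R) (v : R) (D S : {set 'I_m}) :
  (forall i, s i = if i \in D then 0 else v) -> setscore s S = v *+ #|S :\: D|.
Proof.
move=> sE; rewrite /setscore (big_setID D) /= big1 ?add0r => [|i /setIP[_ iD]].
  by rewrite -sumr_const; apply: eq_bigr => i /setDP[_ /negbTE iND]; rewrite sE iND.
by rewrite sE iD.
Qed.

Section TightInstance.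
Variables (gamma k : nat).
Hypotheses (gamma_gt0 : (0 < gamma)%N) (gamma_lt_k : (gamma < k)%N).

(* User u is in group u mod gamma and approves the group item u mod gamma;
   the gamma users u < gamma (one per group) also approve every filler. *)
Definition tight_users : nat := gamma * gamma.+1.

Definition tight_group (u : 'I_tight_users) : 'I_gamma := Ordinal (ltn_pmod u gamma_gt0).

Definition tight_profile : profile (gamma + k) tight_users := fun u =>
  [set i : 'I_(gamma + k) | (i == (u %% gamma)%N :> nat) || (u < gamma)%N && (gamma <= i)%N].

Definition group_items : {set 'I_(gamma + k)} := [set lshift k j | j : 'I_gamma].

Lemma mem_group_items (i : 'I_(gamma + k)) : (i \in group_items) = (i < gamma)%N.
Proof.
apply/imsetP/idP => [[j _ ->] | lt_i_gamma]; first exact: (ltn_ord j).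
by exists (Ordinal lt_i_gamma) => //; apply: val_inj.
Qed.

Lemma card_group_items : #|group_items| = gamma.
Proof. by rewrite card_imset ?card_ord //; apply: lshift_inj. Qed.

Lemma tight_profile_filler u (i : 'I_(gamma + k)) :
  (gamma <= i)%N -> (i \in tight_profile u) = (u < gamma)%N.
Proof.
move=> filler_i; rewrite inE filler_i andbT gtn_eqF //.
exact: leq_trans (ltn_pmod u gamma_gt0) filler_i.
Qed.

Lemma tight_profile_group_item u (i : 'I_(gamma + k)) :
  (i < gamma)%N -> (i \in tight_profile u) = (i == (u %% gamma)%N :> nat).
Proof. by move=> lt_i_gamma; rewrite inE (leqNgt gamma) lt_i_gamma andbF orbF. Qed.

Lemma tight_profile_high (u : 'I_tight_users) (i : 'I_(gamma + k)) :
  (gamma <= u)%N -> (i \in tight_profile u) = (i == (u %% gamma)%N :> nat).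
Proof. by move=> le_gamma_u; rewrite inE ltnNge le_gamma_u orbF. Qed.

Lemma tight_leader_subproof : (gamma <= tight_users)%N.
Proof. exact: leq_pmulr. Qed.

Definition tight_leader (j : 'I_gamma) : 'I_tight_users := widen_ord tight_leader_subproof j.

Lemma tight_group_leader j : tight_group (tight_leader j) = j.
Proof. by apply: val_inj; rewrite /= modn_small. Qed.

Lemma tight_users_gt0 : (0 < tight_users)%N.
Proof. by rewrite muln_gt0 gamma_gt0. Qed.

Lemma tight_partitioned_cohesive : partitioned_cohesive tight_profile tight_group.
Proof.
apply/forallP=> j; apply/andP; split.
  by apply/set0Pn; exists (tight_leader j); rewrite inE tight_group_leader.
apply/existsP; exists (lshift k j); apply/forallP=> u; apply/implyP.
by rewrite inE => /eqP <-; rewrite inE eqxx.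
Qed.

Lemma tight_approves_group_items u (S : {set 'I_(gamma + k)}) :
  group_items \subset S -> tight_profile u :&: S != set0.
Proof.
move=> /subsetP sDS; apply/set0Pn; exists (lshift k (tight_group u)).
by rewrite inE inE eqxx sDS ?imset_f.
Qed.

(* The gamma users i + gamma * t.+1 (t < gamma) approve only item i, and
   gamma * k >= gamma * gamma.+1 makes them a group that JR must represent. *)
Lemma JR_group_items_subset S : JR tight_profile k S -> group_items \subset S.
Proof.
move=> /andP[_ /forallP JR_S]; apply/subsetP=> i; rewrite mem_group_items => lt_i_gamma.
pose B := [set u : 'I_tight_users | ((u %% gamma)%N == i) && (gamma <= u)%N].
have lt_users (t : 'I_gamma) : (i + gamma * t.+1 < tight_users)%N.
  by have := ltn_ord t; rewrite /tight_users; nia.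
pose copy t := Ordinal (lt_users t).
have copy_inj : injective copy.
  move=> t1 t2 /(congr1 val)/eqP; rewrite /= eqn_add2l eqn_mul2l eqn0Ngt gamma_gt0.
  by move/eqP/succn_inj/val_inj.
have cardB : (gamma <= #|B|)%N.
  rewrite -{1}[gamma]card_ord -(card_imset _ copy_inj); apply/subset_leq_card.
  apply/subsetP=> _ /imsetP[t _ ->]; rewrite inE /= addnC mulnC modnMDl modn_small //.
  by rewrite eqxx mulSn -addnA leq_addr.
have bigB : cohesive tight_profile B && (tight_users <= #|B| * k)%N.
  apply/andP; split.
    apply/existsP; exists i; apply/forallP=> u; apply/implyP.
    by rewrite inE => /andP[/eqP ui le_gamma_u]; rewrite tight_profile_high // ui.
  by apply: leq_trans (leq_mul (leqnn gamma) gamma_lt_k) _; rewrite leq_mul2r cardB orbT.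
have /existsP[u /andP[uB /set0Pn[x /setIP[xAu xS]]]] := implyP (JR_S B) bigB.
move: uB xAu; rewrite inE => /andP[/eqP ui le_gamma_u].
by rewrite tight_profile_high // ui => /eqP/val_inj <-.
Qed.

Lemma exists_JR_group_items :
  exists2 Y, JR tight_profile k Y & group_items \subset Y.
Proof.
have [Y sDY cardY] : exists2 Y : {set 'I_(gamma + k)}, group_items \subset Y & #|Y| = k.
  by apply: exists_superset_card; rewrite card_group_items card_ord ltnW //= leq_addl.
exists Y => //; apply: JR_of_approved_by_all tight_users_gt0 cardY _ => u.
exact: tight_approves_group_items.
Qed.

Section TightScore.
Variables (R : realFieldType) (s : 'I_(gamma + k) -> R) (v : R).
Hypotheses (v_gt0 : 0 < v) (sE : forall i, s i = if (gamma <= i)%N then v else 0).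

Lemma tight_setscore S : setscore s S = v *+ #|S :\: group_items|.
Proof. by apply: setscore_const_off => i; rewrite sE mem_group_items leqNgt; case: ltnP. Qed.

Lemma tight_opt : opt s k = v *+ k.
Proof.
apply/le_anti/andP; split.
  apply: bigmax_le => [|S /eqP cardS]; first by rewrite mulrn_wge0 ?ltW.
  by rewrite tight_setscore ler_pMn2l // -[leqRHS]cardS subset_leq_card ?subsetDl.
have cardC : #|~: group_items| = k.
  by apply/eqP; rewrite -(eqn_add2l gamma) -{1}card_group_items cardsC card_ord.
have -> : v *+ k = setscore s (~: group_items) by rewrite tight_setscore setDE setIid cardC.
by apply: le_bigmax_cond; rewrite cardC.
Qed.

Lemma tight_optJR : optJR tight_profile s k = v *+ (k - gamma).
Proof.
have JR_score S : JR tight_profile k S -> setscore s S = v *+ (k - gamma).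
  move=> JR_S; have /andP[/eqP cardS _] := JR_S.
  by rewrite tight_setscore cardsD (setIidPr (JR_group_items_subset JR_S)) cardS card_group_items.
have [Y JR_Y _] := exists_JR_group_items.
apply/le_anti/andP; split; last by rewrite -(JR_score Y) // le_bigmax_cond.
apply: bigmax_le => [|S JR_S]; first by rewrite mulrn_wge0 ?ltW.
by rewrite JR_score.
Qed.

Lemma tight_price :
  0 < optJR tight_profile s k /\ price tight_profile s k = k%:R / (k - gamma)%:R.
Proof.
have kg_gt0 : (0 < k - gamma)%N by rewrite subn_gt0.
rewrite /price tight_opt tight_optJR pmulrn_lgt0 //; split=> //.
rewrite -[v *+ k]mulr_natr -[v *+ _]mulr_natr invfM mulrACA divff ?mul1r ?gt_eqF // ltr0n.
Qed.

End TightScore.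

Lemma tight_fDA_group_item (R : realFieldType) (i : 'I_(gamma + k)) :
  (1 < gamma)%N -> (i < gamma)%N -> fDA R tight_group tight_profile i = 0.
Proof.
move=> gamma_gt1 lt_i_gamma.
pose j : 'I_gamma := if i == 0%N :> nat then Ordinal gamma_gt1 else Ordinal gamma_gt0.
have ji : j != i :> nat.
  by rewrite /j; case: (nat_of_ord i =P 0%N) => [-> | /eqP i_neq0] //=; rewrite eq_sym.
have no_approval : [set u in group_of tight_group j | i \in tight_profile u] = set0.
  apply/setP=> u; rewrite in_set0 inE tight_profile_group_item // inE.
  by apply/negbTE; apply: contra ji => /andP[/eqP <- /eqP ->].
apply/le_anti/andP; split.
  by apply: le_trans (bigmin_le _ j _) _; rewrite no_approval cards0 mul0r.
by apply: le_bigmin => // j' _; rewrite divr_ge0.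
Qed.

Lemma tight_fDA_filler (R : realFieldType) (i i' : 'I_(gamma + k)) :
  (gamma <= i)%N -> (gamma <= i')%N ->
  fDA R tight_group tight_profile i = fDA R tight_group tight_profile i'.
Proof.
move=> filler_i filler_i'; apply: eq_bigr => j _; congr (_%:R / _).
by apply: eq_card => u; rewrite inE [RHS]inE !tight_profile_filler.
Qed.

Lemma tight_fDA_filler_gt0 (R : realFieldType) (i : 'I_(gamma + k)) :
  (gamma <= i)%N -> 0 < fDA R tight_group tight_profile i.
Proof.
move=> filler_i; apply: (big_ind (fun x => 0 < x)) => // [x y x_gt0 y_gt0 | j _].
  by rewrite lt_min x_gt0.
have leader_j : tight_leader j \in group_of tight_group j by rewrite inE tight_group_leader.
rewrite divr_gt0 // ltr0n; apply/card_gt0P; exists (tight_leader j) => //.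
by rewrite inE leader_j tight_profile_filler //=; exact: (ltn_ord j).
Qed.

Lemma tight_fDA (R : realFieldType) : (1 < gamma)%N ->
  exists2 v : R, 0 < v & forall i,
    fDA R tight_group tight_profile i = if (gamma <= i)%N then v else 0.
Proof.
move=> gamma_gt1; have k_gt0 : (0 < k)%N := ltn_trans gamma_gt0 gamma_lt_k.
pose filler : 'I_(gamma + k) := rshift gamma (Ordinal k_gt0).
have filler_ge : (gamma <= filler)%N by rewrite /= addn0.
exists (fDA R tight_group tight_profile filler); first exact: tight_fDA_filler_gt0.
move=> i; case: leqP => [filler_i | lt_i_gamma]; first exact: tight_fDA_filler.
exact: tight_fDA_group_item.
Qed.

End TightInstance.

Theorem theorem2 (R : realFieldType) (k gamma : nat)
  (hk : (1 < k)%N) (hg1 : (1 <= gamma)%N) (hgk : (gamma < k)%N) :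
  (* upper bound: for every scoring rule and every instance with users partitioned
     into gamma cohesive groups, f(S^* ) <= k/(k-gamma) * f(S^*_JR) *)
  (forall f : scoring_rule R, nonneg_rule f ->
     forall (m n : nat) (A : profile m n) (g : 'I_n -> 'I_gamma),
       (k <= m)%N -> partitioned_cohesive A g ->
       opt (fun i => f m n i A) k
         <= (k%:R / (k - gamma)%:R) * optJR A (fun i => f m n i A) k)
  /\
  (* tightness: some scoring rule attains price exactly k/(k-gamma) *)
  (exists f : scoring_rule R, nonneg_rule f /\
     exists (m n : nat) (A : profile m n) (g : 'I_n -> 'I_gamma),
       [/\ (k <= m)%N, partitioned_cohesive A g,
           0 < optJR A (fun i => f m n i A) k &
           price A (fun i => f m n i A) k = k%:R / (k - gamma)%:R])
  /\
  (* tightness for maximin diverse approval (w.r.t. the partition groups) *)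
  ((1 < gamma)%N ->
     exists (m n : nat) (A : profile m n) (g : 'I_n -> 'I_gamma),
       [/\ (k <= m)%N, partitioned_cohesive A g,
           0 < optJR A (fDA R g A) k &
           price A (fDA R g A) k = k%:R / (k - gamma)%:R]).
Proof.
have k_le_gamma_k : (k <= gamma + k)%N := leq_addl gamma k.
have cohT := tight_partitioned_cohesive k hg1.
split.
  move=> f f_ge0 m n A g k_le_m cohA.
  have n_gt0 := partitioned_cohesive_users_gt0 hg1 cohA.
  by apply: opt_le_optJR_partitioned cohA; rewrite ?hgk.
pose T := @tight_profile gamma k.
split.
  pose filler_score m n (i : 'I_m) (_ : profile m n) : R := if (gamma <= i)%N then 1 else 0.
  exists filler_score; split=> [m n i A | ]; first by rewrite /filler_score; case: ifP.
  exists (gamma + k)%N, (tight_users gamma), T, (tight_group hg1).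
  have sE i : filler_score _ _ i T = if (gamma <= i)%N then 1 else 0 by [].
  by have [] := tight_price hg1 hgk ltr01 sE.
move=> gamma_gt1.
exists (gamma + k)%N, (tight_users gamma), T, (tight_group hg1).
have [v v_gt0 fDAE] := tight_fDA hg1 hgk R gamma_gt1.
by have [] := tight_price hg1 hgk v_gt0 fDAE.
Qed.
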